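(* Let $\pi\in\mathfrak{S}_n$ avoid $132$ and have all cycles of length $1$ or $3$. Let the $3$-cycles of $\pi$ have element sets $\{a_i<b_i<c_i\}$, $i=1,\dots,m$. Then every fixed point $g$ of $\pi$ satisfies $g>a_i$ for all $i$, and moreover $g$ lies at a hit of the Dyck word formed by the second and third entries, i.e. $|\{i: b_i<g\}|=|\{i: c_i<g\}|$.
   Context: A permutation avoids $132$ if there are no indices $i<j<k$ with $\pi_i<\pi_k<\pi_j$. (The Dyck word of the second and third entries is obtained by listing $\{b_i\}\cup\{c_i\}$ in increasing order, writing $0$ for each $b_i$ and $1$ for each $c_i$; a hit is a place where the preceding letters contain equally many $0$'s and $1$'s.) *)

From mathcomp Require Import all_boot all_fingroup.
Set Implicit Arguments. Unset Strict Implicit. Unset Printing Implicit Defensive.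

(* Permutations of 'I_n (values 0..n-1; the shift from 1..n is order-preserving). *)

Definition avoids132 (n : nat) (s : 'S_n) : Prop :=
  forall i j k : 'I_n, (i < j)%N -> (j < k)%N ->
    ~ ((s i < s k)%N /\ (s k < s j)%N).

Definition cyc_sorted (n : nat) (O : {set 'I_n}) : seq nat :=
  sort leq [seq val x | x <- enum O].

Definition cyc_a (n : nat) (O : {set 'I_n}) : nat := nth 0 (cyc_sorted O) 0.
Definition cyc_b (n : nat) (O : {set 'I_n}) : nat := nth 0 (cyc_sorted O) 1.
Definition cyc_c (n : nat) (O : {set 'I_n}) : nat := nth 0 (cyc_sorted O) 2.

Definition three_cycles (n : nat) (s : 'S_n) : {set {set 'I_n}} :=
  [set O in porbits s | #|O| == 3].

From mathcomp Require Import all_boot all_fingroup zify.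
Set Implicit Arguments. Unset Strict Implicit. Unset Printing Implicit Defensive.

(* A 3-cycle on a < b < c acts as a -> b -> c -> a or as a -> c -> b -> a, and
   a fixed point g of s lies outside it.  If g < a, then g followed by an
   inversion of the rotation is a 132 pattern, since all values on the cycle
   exceed s g = g.  If b < g < c, then (a, b, g) resp. (b, g, c) is a 132
   pattern.  So, cycle by cycle, g lies above a and on the same side of b and
   of c, which equates the two counts. *)

Lemma perm3_cases (T : finType) (s : {perm T}) (A B C : T) :
  A != B -> A != C -> B != C ->
  {in [:: A; B; C], forall x, s x \in [:: A; B; C] /\ s x != x} ->
  [/\ s A = B, s B = C & s C = A] \/ [/\ s A = C, s B = A & s C = B].
Proof.
move=> nAB nAC nBC sABC.
have [sA nA] := sABC A (mem_head _ _).
have [sB nB] : s B \in [:: A; B; C] /\ s B != B by apply: sABC; rewrite !inE eqxx orbT.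
have [sC nC] : s C \in [:: A; B; C] /\ s C != C by apply: sABC; rewrite !inE eqxx !orbT.
have sinj x y : x != y -> s x != s y by rewrite (inj_eq perm_inj).
move: sA sB sC nA nB nC (sinj _ _ nAB) (sinj _ _ nAC) (sinj _ _ nBC); rewrite !inE.
by do 3!case/or3P=> /eqP->; rewrite ?eqxx //=; [left | right].
Qed.

Lemma perm_neq_of_card_porbit_gt1 (T : finType) (s : {perm T}) x :
  1 < #|porbit s x| -> s x != x.
Proof.
move=> gt1; have := uniq_traject_porbit s x.
by case: #|porbit s x| gt1 => [|[|k]] //= _; rewrite inE eq_sym => /andP[/norP[]].
Qed.

Section ThreeCycles.

Variables (n : nat) (s : 'S_n) (O : {set 'I_n}).
Hypothesis O3 : O \in three_cycles s.

Lemma card_three_cycle : #|O| = 3.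
Proof. by move: O3; rewrite inE => /andP[_ /eqP]. Qed.

Lemma three_cycle_porbit x : x \in O -> porbit s x = O.
Proof.
move: O3; rewrite inE => /andP[/imsetP[y _ ->] _] xO.
by apply/eqP; rewrite eq_porbit_mem.
Qed.

Lemma three_cycle_perm_closed x : x \in O -> s x \in O.
Proof. by move=> xO; rewrite -(three_cycle_porbit xO) -{1}[s]expg1 mem_porbit. Qed.

Lemma three_cycle_perm_neq x : x \in O -> s x != x.
Proof.
move=> xO; apply: perm_neq_of_card_porbit_gt1.
by rewrite three_cycle_porbit // card_three_cycle.
Qed.

End ThreeCycles.

Lemma cyc_sorted_card3 n (O : {set 'I_n}) : #|O| = 3 ->
  exists A B C : 'I_n, [/\ A < B < C, O =i [:: A; B; C] &
    [/\ cyc_a O = A, cyc_b O = B & cyc_c O = C]].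
Proof.
move=> O3; rewrite /cyc_a /cyc_b /cyc_c.
have memO x : (x \in O) = (val x \in cyc_sorted O).
  by rewrite mem_sort (mem_map val_inj) mem_enum.
have inO v : v \in cyc_sorted O -> exists2 X : 'I_n, X \in O & val X = v.
  by rewrite mem_sort => /mapP[X]; rewrite mem_enum => XO ->; exists X.
have := sort_sorted leq_total [seq val x | x <- enum O].
have := sort_uniq leq [seq val x | x <- enum O]; rewrite (map_inj_uniq val_inj) enum_uniq.
have := size_sort leq [seq val x | x <- enum O]; rewrite size_map -cardE O3.
move: memO inO; rewrite /cyc_sorted; case: sort => [|a [|b [|c []]]] //= memO inO _.
have [A _ Ea] := inO a (mem_head _ _).
have [B _ Eb] : exists2 X : 'I_n, X \in O & val X = b by apply: inO; rewrite !inE eqxx orbT.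
have [C _ Ec] : exists2 X : 'I_n, X \in O & val X = c by apply: inO; rewrite !inE eqxx !orbT.
subst a b c; rewrite !inE !andbT negb_or => /andP[/andP[nAB _] nBC] /andP[lAB lBC].
by exists A, B, C; split; rewrite ?ltn_neqAle ?nAB ?nBC ?lAB ?lBC.
Qed.

Lemma avoids132_fixed_3cycle_elems n (s : 'S_n) (g A B C : 'I_n) :
  avoids132 s -> s g = g -> A < B < C -> g \notin [:: A; B; C] ->
  [/\ s A = B, s B = C & s C = A] \/ [/\ s A = C, s B = A & s C = B] ->
  A < g /\ (B < g) = (C < g).
Proof.
move=> av sg /andP[lAB lBC] gABC rot.
have not_below : ~ g < A.
  move=> lgA; case: rot => [[sA sB sC] | [sA sB sC]].
  - by apply: (av g B C); rewrite ?sg ?sA ?sB ?sC //; lia.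
  - by apply: (av g A B); rewrite ?sg ?sA ?sB ?sC //; lia.
have not_between : ~ (B < g < C).
  case/andP=> lBg lgC; case: rot => [[sA sB sC] | [sA sB sC]].
  - by apply: (av A B g); rewrite ?sg ?sA ?sB ?sC //; lia.
  - by apply: (av B g C); rewrite ?sg ?sA ?sB ?sC //; lia.
move: gABC; rewrite !inE !negb_or -!val_eqE /= => /and3P[/eqP ? /eqP ? /eqP ?].
split; first lia.
by apply/idP/idP; lia.
Qed.

Lemma avoids132_fixed_three_cycle n (s : 'S_n) O g :
  avoids132 s -> O \in three_cycles s -> s g = g ->
  cyc_a O < g /\ (cyc_b O < g) = (cyc_c O < g).
Proof.
move=> av O3 sg.
have [A [B [C [/andP[lAB lBC] OE [-> -> ->]]]]] := cyc_sorted_card3 (card_three_cycle O3).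
have sO : {in [:: A; B; C], forall x, s x \in [:: A; B; C] /\ s x != x}.
  move=> x; rewrite -!OE => xO.
  by split; [exact: (three_cycle_perm_closed O3 xO) | exact: (three_cycle_perm_neq O3 xO)].
apply: (avoids132_fixed_3cycle_elems av sg).
- by rewrite lAB.
- by apply/negP => /sO[_]; rewrite sg eqxx.
- by apply: perm3_cases; rewrite // -val_eqE ltn_eqF // (ltn_trans lAB).
Qed.

Theorem lemma4p7 (n : nat) (s : 'S_n) :
  avoids132 s ->
  (forall x : 'I_n, #|porbit s x| = 1 \/ #|porbit s x| = 3) ->
  forall g : 'I_n, s g = g ->
    (forall O, O \in three_cycles s -> (cyc_a O < g)%N) /\
    #|[set O in three_cycles s | (cyc_b O < g)%N]| =
    #|[set O in three_cycles s | (cyc_c O < g)%N]|.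
Proof.
move=> av _ g sg; split=> [O O3|].
  by have [] := avoids132_fixed_three_cycle av O3 sg.
apply: eq_card => O; rewrite [in LHS]in_set [in RHS]in_set.
by apply: andb_id2l => O3; have [] := avoids132_fixed_three_cycle av O3 sg.
Qed.
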